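(* (i) For $(t,x)$ with $0\le t<1$ and $|x|<B^*\sqrt{1-t}$, $\mathcal{L}J^*(t,x)=0$. (ii) For $(t,x)$ with $0\le t<1$ and $|x|>B^*\sqrt{1-t}$, $\mathcal{L}J^*(t,x)\le0$. Here $$J^*(t,x)=\begin{cases}(1-t)^{n+1/2}(F_{2n+1}+G_{2n+1})(x/\sqrt{1-t})\,j(B^* ), & |x|<B^*\sqrt{1-t},\\ g(t,x), & |x|\ge B^*\sqrt{1-t}.\end{cases}$$
   Context: For a function $\xi(t,x)$, $\mathcal{L}\xi=\frac{\partial\xi}{\partial t}-\frac{x}{1-t}\frac{\partial\xi}{\partial x}+\frac12\frac{\partial^2\xi}{\partial x^2}$. $n\ge0$ is an integer. $F_q(y):=\int_0^\infty u^{q-1}e^{yu-u^2/2}\,\mathrm{d}u$ and $G_q(y):=F_q(-y)$. $B^*>0$ is the unique zero of $B\mapsto(2n+1)-BF'_{2n+1}(B)/F_{2n+1}(B)$. $U(t,x)=(1-t)^{n+1/2}(B^* )^{2n+1}F_{2n+1}(x/\sqrt{1-t})/F_{2n+1}(B^* )$ if $x<B^*\sqrt{1-t}$, and $U(t,x)=x^{2n+1}$ otherwise. $g(t,x):=(U(t,x)-x^{2n+1})1_{\{x\le0\}}+(U(t,-x)+x^{2n+1})1_{\{x>0\}}$. $j(D):=\frac{1}{(F_{2n+1}+G_{2n+1})(D)}[D^{2n+1}+(B^* )^{2n+1}G_{2n+1}(D)/F_{2n+1}(B^* )]$. *)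

From Stdlib Require Import Reals Lra.
From Coquelicot Require Import Coquelicot.
Open Scope R_scope.

Definition Fq (q : nat) (y : R) : R :=
  RInt_gen (fun u => u ^ (q - 1) * exp (y * u - u ^ 2 / 2))
           (at_point 0) (Rbar_locally p_infty).

Definition Gq (q : nat) (y : R) : R := Fq q (- y).

(* The function whose unique positive zero is B^* :
   B |-> (2n+1) - B F'_{2n+1}(B) / F_{2n+1}(B) *)
Definition Bfun (n : nat) (B : R) : R :=
  INR (2 * n + 1) - B * Derive (Fq (2 * n + 1)) B / Fq (2 * n + 1) B.

Definition pw (n : nat) (t : R) : R := Rpower (1 - t) (INR n + / 2).

Definition U (n : nat) (Bs t x : R) : R :=
  if Rlt_dec x (Bs * sqrt (1 - t)) then
    pw n t * Bs ^ (2 * n + 1) * Fq (2 * n + 1) (x / sqrt (1 - t))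
      / Fq (2 * n + 1) Bs
  else x ^ (2 * n + 1).

Definition g (n : nat) (Bs t x : R) : R :=
  if Rle_dec x 0 then U n Bs t x - x ^ (2 * n + 1)
  else U n Bs t (- x) + x ^ (2 * n + 1).

Definition jfun (n : nat) (Bs D : R) : R :=
  / (Fq (2 * n + 1) D + Gq (2 * n + 1) D) *
  (D ^ (2 * n + 1) + Bs ^ (2 * n + 1) * Gq (2 * n + 1) D / Fq (2 * n + 1) Bs).

Definition Jstar (n : nat) (Bs t x : R) : R :=
  if Rlt_dec (Rabs x) (Bs * sqrt (1 - t)) then
    pw n t * (Fq (2 * n + 1) (x / sqrt (1 - t)) + Gq (2 * n + 1) (x / sqrt (1 - t)))
      * jfun n Bs Bs
  else g n Bs t x.

Definition Lop (xi : R -> R -> R) (t x : R) : R :=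
  Derive (fun s => xi s x) t - x / (1 - t) * Derive (fun y => xi t y) x
  + / 2 * Derive_n (fun y => xi t y) 2 x.

Definition L_defined (xi : R -> R -> R) (t x : R) : Prop :=
  ex_derive (fun s => xi s x) t /\ ex_derive (fun y => xi t y) x /\
  ex_derive_n (fun y => xi t y) 2 x.

From Stdlib Require Import Reals Lra Lia Psatz Classical.
From Coquelicot Require Import Coquelicot.
Open Scope R_scope.

(* The integral [F_q(y)] is smooth with [F_q' = F_(q+1)], and integration by parts
   gives [F_(q+2) = y F_(q+1) + q F_q]: both [F_q] and [G_q] solve
   [A'' = w A' + q A].  For [q = 2n+1] this is exactly the condition for
   [(1-t)^(n+1/2) A(x/sqrt(1-t))] to be annihilated by [L], so [L Jstar = 0] inside
   the region and [L Jstar = -/+ L x^(2n+1)] outside it.  [L x^(2n+1)] has the sign of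
   [-x] once [x^2/(1-t) >= n + 1/2], which holds for [|x| > Bs sqrt(1-t)] because
   [Bs^2 >= n + 1/2]: at the zero [Bs] we have [F'(Bs) = (2n+1) F(Bs) / Bs], and
   the inequality [int u^(2n) (u - l)^2 e^(Bs u - u^2/2) du >= 0] at
   [l = (2n+1)/Bs] turns into [2 Bs^2 >= 2n+1]. *)

Lemma exp_le_compat a b : a <= b -> exp a <= exp b.
Proof. intros [H | ->]; [apply Rlt_le, exp_increasing, H | apply Rle_refl]. Qed.

Lemma ex_RInt_derivable (f : R -> R) a b :
  (forall u, ex_derive f u) -> ex_RInt f a b.
Proof.
  intros Hf. apply (@ex_RInt_continuous R_CompleteNormedModule).
  intros z _. apply (@ex_derive_continuous R_AbsRing R_NormedModule), Hf.
Qed.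

Lemma is_RInt_exp_opp a b :
  is_RInt (fun u => exp (- u)) a b (exp (- a) - exp (- b)).
Proof.
  replace (exp (- a) - exp (- b)) with (minus (- exp (- b)) (- exp (- a)))
    by (unfold minus, plus, opp; simpl; ring).
  apply (@is_RInt_derive R_CompleteNormedModule (fun u => - exp (- u))).
  - intros u _. auto_derive; [easy | ring].
  - intros u _. apply (@ex_derive_continuous R_AbsRing R_NormedModule).
    auto_derive; easy.
Qed.

Lemma RInt_scal_exp_opp_le K M : 0 <= K -> 0 <= M ->
  RInt (fun u => K * exp (- u)) 0 M <= K.
Proof.
  intros HK HM.
  rewrite (RInt_scal (fun u => exp (- u)))
    by (apply ex_RInt_derivable; intro; auto_derive; easy).
  rewrite (is_RInt_unique _ _ _ _ (is_RInt_exp_opp 0 M)), Ropp_0, exp_0.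
  unfold scal; simpl; unfold mult; simpl.
  pose proof (exp_pos (- M)). nra.
Qed.

Lemma pow_le_exp_INR u k : 0 <= u -> u ^ k <= exp (INR k * u).
Proof.
  intros Hu. induction k as [|k IH].
  - simpl. rewrite Rmult_0_l, exp_0. lra.
  - rewrite S_INR, Rmult_plus_distr_r, Rmult_1_l, Rplus_comm, exp_plus. simpl.
    apply Rmult_le_compat; auto using pow_le.
    pose proof (exp_ineq1_le u). lra.
Qed.

Lemma is_lim_incr_bounded (I : R -> R) K :
  (forall M, 0 <= M -> I M <= K) ->
  (forall M1 M2, 0 <= M1 <= M2 -> I M1 <= I M2) ->
  exists l : R, is_lim I p_infty l.
Proof.
  intros HK Hincr.
  set (E := fun v => exists M, 0 <= M /\ v = I M).
  destruct (completeness E) as [l [Hub Hlub]].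
  - exists K. intros v [M [HM ->]]. auto.
  - exists (I 0), 0. split; [lra | easy].
  - exists l. apply is_lim_spec. intros eps.
    assert (HM0 : exists M0, 0 <= M0 /\ l - eps < I M0).
    { apply NNPP. intros Hn.
      assert (Hb : is_upper_bound E (l - eps)).
      { intros v [M [HM ->]]. apply Rnot_lt_le. intros Hc. apply Hn. now exists M. }
      specialize (Hlub _ Hb). pose proof (cond_pos eps). lra. }
    destruct HM0 as [M0 [HM0 Hlt]].
    exists M0. intros M HM.
    assert (I M0 <= I M) by (apply Hincr; lra).
    assert (I M <= l) by (apply Hub; exists M; split; [lra | easy]).
    apply Rabs_def1; lra.
Qed.

Lemma is_RInt_gen_of_is_lim f (I : R -> R) (l : R) :
  (forall M, 0 <= M -> is_RInt f 0 M (I M)) -> is_lim I p_infty l ->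
  is_RInt_gen f (at_point 0) (Rbar_locally p_infty) l.
Proof.
  intros HI Hl P HP.
  destruct (Hl P HP) as [M HM].
  apply (Filter_prod _ _ _ (fun a => a = 0) (fun b => Rmax 0 M < b)).
  - reflexivity.
  - now exists (Rmax 0 M).
  - intros a b -> Hb. exists (I b). split.
    + apply HI. pose proof (Rmax_l 0 M). simpl. lra.
    + apply HM. pose proof (Rmax_r 0 M). lra.
Qed.

Lemma is_lim_le_const (f : R -> R) (l c : R) : is_lim f p_infty l ->
  (forall M, 0 <= M -> f M <= c) -> l <= c.
Proof.
  intros Hl Hc.
  apply (is_lim_le_loc f (fun _ => c) p_infty l c); auto using is_lim_const.
  exists 0. intros. apply Hc. lra.
Qed.

Lemma is_lim_ge_const (f : R -> R) (l c : R) : is_lim f p_infty l ->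
  (forall M, 0 <= M -> c <= f M) -> c <= l.
Proof.
  intros Hl Hc.
  apply (is_lim_le_loc (fun _ => c) f p_infty c l); auto using is_lim_const.
  exists 0. intros. apply Hc. lra.
Qed.

Lemma is_lim_unique_R (f : R -> R) (l1 l2 : R) :
  is_lim f p_infty l1 -> is_lim f p_infty l2 -> l1 = l2.
Proof.
  intros H1 H2. apply is_lim_unique in H1, H2. rewrite H1 in H2. now injection H2.
Qed.

Lemma exp_sub_1_sub_le a : Rabs (exp a - 1 - a) <= a ^ 2 * exp (Rabs a).
Proof.
  pose proof (exp_ineq1_le a) as Hlow.
  assert (Hup : exp a - 1 <= a * exp a).
  { pose proof (exp_ineq1_le (- a)). pose proof (exp_pos a).
    rewrite exp_Ropp in H. apply Rmult_le_compat_r with (r := exp a) in H; [|lra].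
    rewrite Rinv_l in H by lra. lra. }
  rewrite Rabs_pos_eq by lra.
  destruct (Rle_or_lt 0 a) as [Ha | Ha].
  - rewrite Rabs_pos_eq by lra. nra.
  - rewrite Rabs_left by lra.
    assert (1 <= exp (- a)) by (pose proof (exp_ineq1_le (- a)); lra).
    nra.
Qed.

Definition Fq_integrand (k : nat) (y u : R) : R := u ^ k * exp (y * u - u ^ 2 / 2).

Definition Fq_trunc (k : nat) (y M : R) : R := RInt (Fq_integrand k y) 0 M.

Definition Fq_dom (k : nat) (y : R) : R := exp ((Rabs y + INR k + 1) ^ 2 / 2).

Lemma ex_derive_Fq_integrand k y u : ex_derive (Fq_integrand k y) u.
Proof. unfold Fq_integrand. auto_derive. easy. Qed.

Lemma ex_RInt_Fq_integrand k y a b : ex_RInt (Fq_integrand k y) a b.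
Proof. apply ex_RInt_derivable, ex_derive_Fq_integrand. Qed.

Lemma Fq_integrand_ge0 k y u : 0 <= u -> 0 <= Fq_integrand k y u.
Proof.
  intros Hu. unfold Fq_integrand.
  apply Rmult_le_pos; [now apply pow_le | apply Rlt_le, exp_pos].
Qed.

(* Completing the square: [(|y| + k) u - u^2/2 <= (|y| + k + 1)^2/2 - u]. *)
Lemma Fq_integrand_le k y u : 0 <= u ->
  Fq_integrand k y u <= Fq_dom k y * exp (- u).
Proof.
  intros Hu. unfold Fq_integrand, Fq_dom. rewrite <- exp_plus.
  apply Rle_trans with (exp (INR k * u) * exp (y * u - u ^ 2 / 2)).
  - apply Rmult_le_compat_r; [apply Rlt_le, exp_pos | now apply pow_le_exp_INR].
  - rewrite <- exp_plus. apply exp_le_compat.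
    assert (y * u <= Rabs y * u) by (apply Rmult_le_compat_r; [easy | apply Rle_abs]).
    pose proof (pow2_ge_0 (u - (Rabs y + INR k + 1))). nra.
Qed.

Lemma Fq_trunc_bounds k y M : 0 <= M -> 0 <= Fq_trunc k y M <= Fq_dom k y.
Proof.
  intros HM. unfold Fq_trunc. split.
  - apply RInt_ge_0; auto using ex_RInt_Fq_integrand.
    intros u Hu. apply Fq_integrand_ge0. lra.
  - apply Rle_trans with (RInt (fun u => Fq_dom k y * exp (- u)) 0 M).
    + apply RInt_le; auto using ex_RInt_Fq_integrand.
      * apply ex_RInt_derivable. intros u. auto_derive. easy.
      * intros u Hu. apply Fq_integrand_le. lra.
    + apply RInt_scal_exp_opp_le; [apply Rlt_le, exp_pos | easy].
Qed.

Lemma Fq_trunc_incr k y M1 M2 : 0 <= M1 <= M2 -> Fq_trunc k y M1 <= Fq_trunc k y M2.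
Proof.
  intros HM. unfold Fq_trunc.
  rewrite <- (RInt_Chasles (Fq_integrand k y) 0 M1 M2) by apply ex_RInt_Fq_integrand.
  assert (0 <= RInt (Fq_integrand k y) M1 M2).
  { apply RInt_ge_0; [lra | apply ex_RInt_Fq_integrand |].
    intros u Hu. apply Fq_integrand_ge0. lra. }
  unfold plus; simpl. lra.
Qed.

Lemma is_lim_Fq_trunc k y : is_lim (Fq_trunc k y) p_infty (Fq (S k) y).
Proof.
  destruct (is_lim_incr_bounded (Fq_trunc k y) (Fq_dom k y)) as [l Hl].
  - intros M HM. now apply Fq_trunc_bounds.
  - intros M1 M2 HM. now apply Fq_trunc_incr.
  - replace (Fq (S k) y) with l; [easy |].
    unfold Fq. replace (S k - 1)%nat with k by lia.
    symmetry. apply is_RInt_gen_unique.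
    apply (is_RInt_gen_of_is_lim _ (Fq_trunc k y)); [| easy].
    intros M _. apply (@RInt_correct R_CompleteNormedModule), ex_RInt_Fq_integrand.
Qed.

Lemma Fq_ge0 k y : 0 <= Fq (S k) y.
Proof.
  apply (is_lim_ge_const _ _ _ (is_lim_Fq_trunc k y)).
  intros M HM. now apply Fq_trunc_bounds.
Qed.

Lemma is_lim_RInt_Fq_comb k y a b c :
  is_lim (fun M => RInt (fun u => a * Fq_integrand k y u + b * Fq_integrand (S k) y u
                                  + c * Fq_integrand (S (S k)) y u) 0 M)
    p_infty (a * Fq (S k) y + b * Fq (S (S k)) y + c * Fq (S (S (S k))) y).
Proof.
  apply (is_lim_ext (fun M => a * Fq_trunc k y M + b * Fq_trunc (S k) y M
                              + c * Fq_trunc (S (S k)) y M)).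
  - intros M. symmetry. apply is_RInt_unique. unfold Fq_trunc.
    apply (@is_RInt_plus R_NormedModule); [apply (@is_RInt_plus R_NormedModule) |];
      apply (@is_RInt_scal R_NormedModule), (@RInt_correct R_CompleteNormedModule),
        ex_RInt_Fq_integrand.
  - apply is_lim_plus'; [apply is_lim_plus' |];
      apply (is_lim_scal_l _ _ p_infty (Finite _)), is_lim_Fq_trunc.
Qed.

Lemma is_lim_Fq_integrand k y : is_lim (Fq_integrand k y) p_infty 0.
Proof.
  apply (is_lim_le_le_loc (fun _ => 0) (fun M => Fq_dom k y * exp (- M))).
  - exists 0. intros M HM. split; [apply Fq_integrand_ge0 | apply Fq_integrand_le]; lra.
  - apply is_lim_const.
  - replace (Finite 0) with (Rbar_mult (Fq_dom k y) 0) by (simpl; f_equal; ring).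
    apply is_lim_scal_l.
    apply (is_lim_comp exp (fun M => - M) p_infty 0 m_infty).
    + apply is_lim_exp_m.
    + apply (is_lim_opp (fun M => M) p_infty p_infty), is_lim_id.
    + exists 0. intros; discriminate.
Qed.

(* Integration by parts against [d/du (u^(k+1) e^(yu - u^2/2))]. *)
Lemma Fq_rec k y :
  Fq (S (S (S k))) y = y * Fq (S (S k)) y + INR (S k) * Fq (S k) y.
Proof.
  assert (Hparts : forall M, RInt (fun u => INR (S k) * Fq_integrand k y u
      + y * Fq_integrand (S k) y u + (-1) * Fq_integrand (S (S k)) y u) 0 M
      = Fq_integrand (S k) y M).
  { intros M. apply is_RInt_unique.
    replace (Fq_integrand (S k) y M)
      with (minus (Fq_integrand (S k) y M) (Fq_integrand (S k) y 0))
      by (unfold Fq_integrand, minus, plus, opp; simpl; ring).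
    apply (@is_RInt_derive R_CompleteNormedModule).
    - intros u _. unfold Fq_integrand. auto_derive; [easy |].
      replace (y * u + - (u * (u * 1) * / 2)) with (y * u - u ^ 2 / 2) by field.
      change (match k with 0%nat => 1 | S _ => INR k + 1 end) with (INR (S k)).
      cbn [pow]. field.
    - intros u _. apply (@ex_derive_continuous R_AbsRing R_NormedModule).
      unfold Fq_integrand. auto_derive. easy. }
  pose proof (is_lim_RInt_Fq_comb k y (INR (S k)) y (-1)) as Hlim.
  apply (is_lim_ext _ _ _ _ Hparts) in Hlim.
  pose proof (is_lim_unique_R _ _ _ Hlim (is_lim_Fq_integrand (S k) y)). lra.
Qed.

Lemma Fq_quadratic_ge0 k y lam :
  0 <= Fq (S (S (S k))) y - 2 * lam * Fq (S (S k)) y + lam ^ 2 * Fq (S k) y.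
Proof.
  replace (Fq (S (S (S k))) y - 2 * lam * Fq (S (S k)) y + lam ^ 2 * Fq (S k) y)
    with (lam ^ 2 * Fq (S k) y + (-2 * lam) * Fq (S (S k)) y + 1 * Fq (S (S (S k))) y)
    by ring.
  apply (is_lim_ge_const _ _ _ (is_lim_RInt_Fq_comb k y _ _ _)).
  intros M HM. apply RInt_ge_0; [easy | |].
  - apply ex_RInt_derivable. intros u. unfold Fq_integrand. auto_derive. easy.
  - intros u Hu. unfold Fq_integrand.
    assert (0 <= u ^ k * exp (y * u - u ^ 2 / 2) * (u - lam) ^ 2).
    { apply Rmult_le_pos; [apply Rmult_le_pos |].
      - apply pow_le. lra.
      - apply Rlt_le, exp_pos.
      - apply pow2_ge_0. }
    cbn [pow] in *. nra.
Qed.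

Lemma is_derive_sq_remainder (f : R -> R) y l C :
  (forall h, Rabs h <= 1 -> Rabs (f (y + h) - f y - h * l) <= C * h ^ 2) ->
  is_derive f y l.
Proof.
  intros Hrem. apply is_derive_Reals. intros eps Heps.
  set (K := Rabs C + 1).
  assert (HK : 0 < K) by (unfold K; pose proof (Rabs_pos C); lra).
  assert (Hd : 0 < Rmin 1 (eps / K)) by (apply Rmin_pos; [lra | now apply Rdiv_lt_0_compat]).
  exists (mkposreal _ Hd). intros h Hh0 Hh. simpl in Hh.
  pose proof (Rmin_l 1 (eps / K)). pose proof (Rmin_r 1 (eps / K)).
  assert (Hh_pos : 0 < Rabs h) by now apply Rabs_pos_lt.
  specialize (Hrem h ltac:(lra)).
  replace ((f (y + h) - f y) / h - l) with ((f (y + h) - f y - h * l) / h) by (field; easy).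
  unfold Rdiv. rewrite Rabs_mult, Rabs_inv.
  apply (Rmult_lt_reg_r (Rabs h)); [easy |].
  rewrite Rmult_assoc, Rinv_l by lra.
  assert (C * h ^ 2 <= K * Rabs h * Rabs h).
  { rewrite <- (pow2_abs h). pose proof (Rle_abs C). unfold K. nra. }
  assert (K * Rabs h < eps).
  { apply (Rmult_lt_reg_r (/ K)); [now apply Rinv_0_lt_compat |].
    replace (K * Rabs h * / K) with (Rabs h) by (field; lra). lra. }
  nra.
Qed.

Lemma Fq_integrand_sq_remainder k y h u : Rabs h <= 1 -> 0 <= u ->
  Rabs (Fq_integrand k (y + h) u - Fq_integrand k y u - h * Fq_integrand (S k) y u)
  <= h ^ 2 * Fq_integrand (S (S k)) (Rabs y + 1) u.
Proof.
  intros Hh Hu. unfold Fq_integrand.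
  set (E := exp (y * u - u ^ 2 / 2)).
  replace (u ^ k * exp ((y + h) * u - u ^ 2 / 2) - u ^ k * E - h * (u ^ S k * E))
    with (u ^ k * E * (exp (h * u) - 1 - h * u)).
  2:{ unfold E. replace ((y + h) * u - u ^ 2 / 2) with ((y * u - u ^ 2 / 2) + h * u) by ring.
      rewrite exp_plus. simpl. ring. }
  assert (HkE : 0 <= u ^ k * E) by (apply Rmult_le_pos; [now apply pow_le | apply Rlt_le, exp_pos]).
  rewrite Rabs_mult, (Rabs_pos_eq _ HkE).
  apply Rle_trans with (u ^ k * E * ((h * u) ^ 2 * exp (Rabs (h * u)))).
  { apply Rmult_le_compat_l; [easy | apply exp_sub_1_sub_le]. }
  assert (Hexp : E * exp (Rabs (h * u)) <= exp ((Rabs y + 1) * u - u ^ 2 / 2)).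
  { unfold E. rewrite <- exp_plus. apply exp_le_compat.
    rewrite Rabs_mult, (Rabs_pos_eq u) by easy.
    assert (y * u <= Rabs y * u) by (apply Rmult_le_compat_r; [easy | apply Rle_abs]).
    assert (Rabs h * u <= u) by (rewrite <- (Rmult_1_l u) at 2; now apply Rmult_le_compat_r).
    lra. }
  replace (u ^ k * E * ((h * u) ^ 2 * exp (Rabs (h * u))))
    with (h ^ 2 * u ^ S (S k) * (E * exp (Rabs (h * u)))) by (simpl; ring).
  rewrite Rmult_assoc.
  apply Rmult_le_compat_l; [apply pow2_ge_0 |].
  apply Rmult_le_compat_l; [now apply pow_le | easy].
Qed.

Lemma RInt_Fq_integrand_sq_remainder k y h M : Rabs h <= 1 -> 0 <= M ->
  Rabs (RInt (fun u => Fq_integrand k (y + h) u - Fq_integrand k y u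
                       - h * Fq_integrand (S k) y u) 0 M)
  <= Fq_dom (S (S k)) (Rabs y + 1) * h ^ 2.
Proof.
  intros Hh HM.
  set (r := fun u => Fq_integrand k (y + h) u - Fq_integrand k y u
                     - h * Fq_integrand (S k) y u).
  assert (Hr : forall u, ex_derive r u)
    by (intros u; unfold r, Fq_integrand; auto_derive; easy).
  eapply Rle_trans; [apply abs_RInt_le; [easy | now apply ex_RInt_derivable] |].
  apply Rle_trans with (RInt (fun u => h ^ 2 * Fq_integrand (S (S k)) (Rabs y + 1) u) 0 M).
  - apply RInt_le; [easy | | |].
    + apply (@ex_RInt_continuous R_CompleteNormedModule). intros u _.
      apply continuous_Rabs_comp, (@ex_derive_continuous R_AbsRing R_NormedModule), Hr.
    + apply ex_RInt_derivable. intros u. unfold Fq_integrand. auto_derive. easy.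
    + intros u Hu. apply Fq_integrand_sq_remainder; lra.
  - rewrite (RInt_scal (Fq_integrand (S (S k)) (Rabs y + 1))) by apply ex_RInt_Fq_integrand.
    unfold scal; simpl; unfold mult; simpl. fold (Fq_trunc (S (S k)) (Rabs y + 1) M).
    pose proof (Fq_trunc_bounds (S (S k)) (Rabs y + 1) M HM).
    pose proof (pow2_ge_0 h). nra.
Qed.

Lemma Fq_sq_remainder k y h : Rabs h <= 1 ->
  Rabs (Fq (S k) (y + h) - Fq (S k) y - h * Fq (S (S k)) y)
  <= Fq_dom (S (S k)) (Rabs y + 1) * h ^ 2.
Proof.
  intros Hh.
  assert (Hlim : is_lim (fun M => RInt (fun u => Fq_integrand k (y + h) u
                   - Fq_integrand k y u - h * Fq_integrand (S k) y u) 0 M) p_infty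
                   (Fq (S k) (y + h) - Fq (S k) y - h * Fq (S (S k)) y)).
  { apply (is_lim_ext (fun M => Fq_trunc k (y + h) M - Fq_trunc k y M
                                - h * Fq_trunc (S k) y M)).
    - intros M. unfold Fq_trunc. symmetry. apply is_RInt_unique.
      apply (@is_RInt_minus R_NormedModule); [apply (@is_RInt_minus R_NormedModule) |];
        [| | apply (@is_RInt_scal R_NormedModule)];
        apply (@RInt_correct R_CompleteNormedModule), ex_RInt_Fq_integrand.
    - apply is_lim_minus'; [apply is_lim_minus' |];
        [apply is_lim_Fq_trunc | apply is_lim_Fq_trunc |].
      apply (is_lim_scal_l _ _ p_infty (Finite _)), is_lim_Fq_trunc. }
  pose proof (fun M HM => proj1 (Rabs_le_between _ _)
                 (RInt_Fq_integrand_sq_remainder k y h M Hh HM)) as Hbound.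
  apply Rabs_le. split.
  - apply (is_lim_ge_const _ _ _ Hlim). intros M HM. apply Hbound, HM.
  - apply (is_lim_le_const _ _ _ Hlim). intros M HM. apply Hbound, HM.
Qed.

Lemma Fq_derive k y : is_derive (Fq (S k)) y (Fq (S (S k)) y).
Proof.
  apply (is_derive_sq_remainder _ _ _ (Fq_dom (S (S k)) (Rabs y + 1))).
  apply Fq_sq_remainder.
Qed.

Lemma Fq_critical_sq_ge k B : 0 < B ->
  INR (S k) - B * Derive (Fq (S k)) B / Fq (S k) B = 0 ->
  INR (S k) <= 2 * B ^ 2.
Proof.
  intros HB Hcrit.
  rewrite (is_derive_unique _ _ _ (Fq_derive k B)) in Hcrit.
  pose proof (Fq_rec k B) as Hrec.
  pose proof (Fq_quadratic_ge0 k B (INR (S k) / B)) as Hquad.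
  set (q := INR (S k)) in *.
  set (F0 := Fq (S k) B) in *.
  set (F1 := Fq (S (S k)) B) in *.
  assert (Hq : 0 < q) by apply lt_0_INR, Nat.lt_0_succ.
  assert (HF0 : 0 < F0).
  { destruct (Fq_ge0 k B) as [Hpos | Hzero]; [easy |].
    fold F0 in Hzero. rewrite <- Hzero in Hcrit. unfold Rdiv in Hcrit.
    rewrite Rinv_0 in Hcrit. lra. }
  assert (HF1 : F1 = q * F0 / B).
  { assert (Hcrit' : q * F0 - B * F1 = 0).
    { replace (q * F0 - B * F1) with ((q - B * F1 / F0) * F0) by (field; lra).
      rewrite Hcrit. ring. }
    field_simplify_eq; lra. }
  rewrite Hrec, HF1 in Hquad.
  replace (B * (q * F0 / B) + q * F0 - 2 * (q / B) * (q * F0 / B) + (q / B) ^ 2 * F0)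
    with (q * F0 / B ^ 2 * (2 * B ^ 2 - q)) in Hquad by (field; lra).
  assert (0 < q * F0 / B ^ 2) by (apply Rdiv_lt_0_compat; [nra | now apply pow_lt]).
  nra.
Qed.

Definition hermite_ode (q : nat) (A A1 A2 : R -> R) : Prop :=
  (forall w, is_derive A w (A1 w)) /\ (forall w, is_derive A1 w (A2 w)) /\
  (forall w, A2 w = w * A1 w + INR q * A w).

Lemma hermite_ode_Fq k : hermite_ode (S k) (Fq (S k)) (Fq (S (S k))) (Fq (S (S (S k)))).
Proof. split; [| split]; intros; [apply Fq_derive | apply Fq_derive | apply Fq_rec]. Qed.

Lemma hermite_ode_Fq_odd n :
  hermite_ode (2 * n + 1) (Fq (2 * n + 1)) (Fq (2 * n + 2)) (Fq (2 * n + 3)).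
Proof.
  replace (2 * n + 1)%nat with (S (2 * n)) by lia.
  replace (2 * n + 2)%nat with (S (S (2 * n))) by lia.
  replace (2 * n + 3)%nat with (S (S (S (2 * n)))) by lia.
  apply hermite_ode_Fq.
Qed.

Lemma hermite_ode_opp q A A1 A2 : hermite_ode q A A1 A2 ->
  hermite_ode q (fun w => A (- w)) (fun w => - A1 (- w)) (fun w => A2 (- w)).
Proof.
  intros [HA [HA1 Hode]].
  assert (Hchain : forall (f f' : R -> R), (forall w, is_derive f w (f' w)) ->
            forall w, is_derive (fun z => f (- z)) w (- f' (- w))).
  { intros f f' Hf w.
    apply (is_derive_ext (fun z => f (- z))); [easy |].
    replace (- f' (- w)) with (-1 * f' (- w)) by ring.
    apply (is_derive_comp f (fun z => - z)); [apply Hf | auto_derive; [easy | ring]]. }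
  split; [| split].
  - now apply Hchain.
  - intros w. replace (A2 (- w)) with (- - A2 (- w)) by ring.
    apply (is_derive_opp (fun z => A1 (- z))). now apply Hchain.
  - intros w. rewrite Hode. ring.
Qed.

Lemma hermite_ode_plus q A A1 A2 B B1 B2 :
  hermite_ode q A A1 A2 -> hermite_ode q B B1 B2 ->
  hermite_ode q (fun w => A w + B w) (fun w => A1 w + B1 w) (fun w => A2 w + B2 w).
Proof.
  intros [HA [HA1 HodeA]] [HB [HB1 HodeB]].
  split; [| split]; intros w.
  - now apply (is_derive_plus A B).
  - now apply (is_derive_plus A1 B1).
  - rewrite HodeA, HodeB. ring.
Qed.

Lemma Lop_of_local_derive (xi : R -> R -> R) (h k k1 : R -> R) t x ht k2 :
  locally t (fun s => xi s x = h s) -> locally x (fun y => xi t y = k y) ->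
  is_derive h t ht -> (forall y, is_derive k y (k1 y)) -> is_derive k1 x k2 ->
  L_defined xi t x /\ Lop xi t x = ht - x / (1 - t) * k1 x + / 2 * k2.
Proof.
  intros Ht Hx Hh Hk Hk1.
  assert (Ht' : locally t (fun s => h s = xi s x)) by (revert Ht; apply filter_imp; easy).
  assert (Hx' : locally x (fun y => k y = xi t y)) by (revert Hx; apply filter_imp; easy).
  assert (Hd1 : forall y, Derive k y = k1 y) by (intros y; apply is_derive_unique, Hk).
  assert (Hd2 : Derive_n k 2 x = k2).
  { simpl. rewrite (Derive_ext _ _ _ Hd1). now apply is_derive_unique. }
  split; [split; [| split] |].
  - apply (ex_derive_ext_loc _ _ _ Ht'). now exists ht.
  - apply (ex_derive_ext_loc _ _ _ Hx'). now exists (k1 x).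
  - apply (ex_derive_n_ext_loc _ _ 2 _ Hx'). simpl.
    apply (ex_derive_ext k1); [intros; symmetry; apply Hd1 | now exists k2].
  - assert (E1 : Derive (fun s => xi s x) t = ht).
    { rewrite <- (is_derive_unique _ _ _ Hh). now apply Derive_ext_loc. }
    assert (E2 : Derive (fun y => xi t y) x = k1 x).
    { rewrite <- Hd1. now apply Derive_ext_loc. }
    assert (E3 : Derive_n (fun y => xi t y) 2 x = k2).
    { rewrite <- Hd2. now apply Derive_n_ext_loc. }
    unfold Lop. now rewrite E1, E2, E3.
Qed.

Definition L_odd_power (n : nat) (t x : R) : R :=
  - x / (1 - t) * (INR (2 * n + 1) * x ^ (2 * n))
  + / 2 * (INR (2 * n + 1) * (INR (2 * n) * x ^ pred (2 * n))).

Lemma pw_derive n t : t < 1 -> is_derive (pw n) t (- (INR n + / 2) * pw n t / (1 - t)).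
Proof.
  intros Ht. unfold pw, Rpower. auto_derive; [lra |].
  replace (1 + - t) with (1 - t) by ring. field. lra.
Qed.

Lemma is_derive_scaled_time (A A1 : R -> R) c e n t x :
  (forall w, is_derive A w (A1 w)) -> t < 1 ->
  is_derive (fun r => c * pw n r * A (x / sqrt (1 - r)) + e * x ^ (2 * n + 1)) t
    (c * pw n t / (1 - t) * (- (INR n + / 2) * A (x / sqrt (1 - t))
                             + / 2 * (x / sqrt (1 - t)) * A1 (x / sqrt (1 - t)))).
Proof.
  intros HA Ht.
  assert (Hss : sqrt (1 - t) * sqrt (1 - t) = 1 - t) by (apply sqrt_sqrt; lra).
  assert (Hs : 0 < sqrt (1 - t)) by (apply sqrt_lt_R0; lra).
  assert (Dpw : Derive (fun r : R => pw n r) t = - (INR n + / 2) * pw n t / (1 - t))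
    by now apply is_derive_unique, pw_derive.
  assert (DA : Derive (fun r : R => A r) (x / sqrt (1 - t)) = A1 (x / sqrt (1 - t)))
    by apply is_derive_unique, HA.
  auto_derive; replace (1 + - t) with (1 - t) by ring.
  - repeat split; try lra.
    + eexists. now apply pw_derive.
    + eexists. apply HA.
  - change (x * / sqrt (1 - t)) with (x / sqrt (1 - t)).
    rewrite DA, Dpw.
    set (s := sqrt (1 - t)) in *. rewrite <- Hss. field. lra.
Qed.

Lemma is_derive_scaled_odd_space (A A1 : R -> R) a e n s y :
  (forall w, is_derive A w (A1 w)) -> 0 < s ->
  is_derive (fun z => a * A (z / s) + e * z ^ (2 * n + 1)) y
    (a * (A1 (y / s) / s) + e * (INR (2 * n + 1) * y ^ (2 * n))).
Proof.
  intros HA Hs. auto_derive.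
  - now exists (A1 (y / s)).
  - change (y * / s) with (y / s).
    assert (DA : Derive (fun r : R => A r) (y / s) = A1 (y / s))
      by apply is_derive_unique, HA.
    rewrite DA.
    replace (n + (n + 0))%nat with (2 * n)%nat by lia.
    replace (Init.Nat.pred (2 * n + 1)) with (2 * n)%nat by lia. field. lra.
Qed.

Lemma is_derive_scaled_even_space (A1 A2 : R -> R) a e n s y :
  (forall w, is_derive A1 w (A2 w)) -> 0 < s ->
  is_derive (fun z => a * (A1 (z / s) / s) + e * (INR (2 * n + 1) * z ^ (2 * n))) y
    (a * (A2 (y / s) / (s * s)) + e * (INR (2 * n + 1) * (INR (2 * n) * y ^ pred (2 * n)))).
Proof.
  intros HA1 Hs. auto_derive.
  - now exists (A2 (y / s)).
  - change (y * / s) with (y / s).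
    assert (DA1 : Derive (fun r : R => A1 r) (y / s) = A2 (y / s))
      by apply is_derive_unique, HA1.
    rewrite DA1.
    replace (n + (n + 0))%nat with (2 * n)%nat by lia. field. lra.
Qed.

Lemma Lop_scaled_plus_odd_power (xi : R -> R -> R) (A A1 A2 : R -> R) c e n t x :
  hermite_ode (2 * n + 1) A A1 A2 -> t < 1 ->
  locally t (fun s => xi s x = c * pw n s * A (x / sqrt (1 - s)) + e * x ^ (2 * n + 1)) ->
  locally x (fun y => xi t y = c * pw n t * A (y / sqrt (1 - t)) + e * y ^ (2 * n + 1)) ->
  L_defined xi t x /\ Lop xi t x = e * L_odd_power n t x.
Proof.
  intros [HA [HA1 Hode]] Ht Hloc_t Hloc_x.
  assert (Hs : 0 < sqrt (1 - t)) by (apply sqrt_lt_R0; lra).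
  assert (Hss : sqrt (1 - t) * sqrt (1 - t) = 1 - t) by (apply sqrt_sqrt; lra).
  destruct (Lop_of_local_derive xi _ _ _ t x _ _ Hloc_t Hloc_x
              (is_derive_scaled_time A A1 c e n t x HA Ht)
              (fun y => is_derive_scaled_odd_space A A1 (c * pw n t) e n _ y HA Hs)
              (is_derive_scaled_even_space A1 A2 (c * pw n t) e n _ x HA1 Hs))
    as [Hdef Hval].
  split; [easy |]. rewrite Hval.
  unfold L_odd_power. rewrite Hode, Hss.
  replace (INR (2 * n + 1)) with (2 * INR n + 1) by (rewrite plus_INR, mult_INR; simpl; ring).
  set (s := sqrt (1 - t)) in *. set (w := x / s).
  assert (Hx : x = w * s) by (unfold w; field; lra).
  clearbody w. subst x.
  rewrite <- Hss. field. lra.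
Qed.

Lemma L_odd_power_sign n e t x : t < 1 -> 0 < e * x ->
  INR n + / 2 <= x ^ 2 / (1 - t) -> e * L_odd_power n t x <= 0.
Proof.
  intros Ht Hex Hx. unfold L_odd_power.
  destruct n as [| m].
  - simpl. replace (e * (- x / (1 - t) * (1 * 1) + / 2 * (1 * (0 * 1))))
      with (- (e * x) / (1 - t)) by (field; lra).
    apply Rlt_le, Rdiv_neg_pos; lra.
  - replace (pred (2 * S m)) with (S (2 * m)) by lia.
    replace (2 * S m)%nat with (S (S (2 * m))) by lia.
    assert (H3 : INR (S (S (2 * m)) + 1) = 2 * INR m + 3)
      by (rewrite plus_INR, !S_INR, mult_INR; simpl; ring).
    assert (H2 : INR (S (S (2 * m))) = 2 * INR m + 2)
      by (rewrite !S_INR, mult_INR; simpl; ring).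
    rewrite H3, H2. cbn [pow].
    set (p := x ^ (2 * m)).
    assert (Hp : 0 <= p) by (unfold p; rewrite pow_mult; apply pow_le, pow2_ge_0).
    assert (Hm : 0 <= INR m) by apply pos_INR.
    replace (e * (- x / (1 - t) * ((2 * INR m + 3) * (x * (x * p)))
                  + / 2 * ((2 * INR m + 3) * ((2 * INR m + 2) * (x * p)))))
      with ((e * x) * p * (2 * INR m + 3) * (INR m + 1 - x ^ 2 / (1 - t)))
      by (simpl; field; lra).
    assert (0 <= e * x * p * (2 * INR m + 3)) by (apply Rmult_le_pos; nra).
    apply Rmult_le_0_l; [easy |]. rewrite S_INR in Hx. lra.
Qed.

Lemma locally_lt (f g : R -> R) z : continuous f z -> continuous g z -> f z < g z ->
  locally z (fun u => f u < g u).
Proof.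
  intros Hf Hg Hlt.
  assert (Hd : continuous (fun u => g u - f u) z)
    by (apply (continuous_minus g f); easy).
  assert (Hpos : 0 < g z - f z) by lra.
  apply (filter_imp (fun u => 0 < g u - f u)); [intros; lra |].
  apply Hd. exists (mkposreal _ Hpos). intros v Hv.
  apply Rabs_lt_between' in Hv. simpl in Hv. lra.
Qed.

Lemma continuous_scaled_sqrt B t : t < 1 -> continuous (fun s => B * sqrt (1 - s)) t.
Proof.
  intros Ht. apply (@ex_derive_continuous R_AbsRing R_NormedModule).
  auto_derive. lra.
Qed.

Lemma Bstar_sq_ge n Bs : 0 < Bs -> Bfun n Bs = 0 -> INR n + / 2 <= Bs ^ 2.
Proof.
  intros HB Hzero. unfold Bfun in Hzero.
  replace (2 * n + 1)%nat with (S (2 * n)) in Hzero by lia.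
  pose proof (Fq_critical_sq_ge (2 * n) Bs HB Hzero) as H.
  rewrite S_INR, mult_INR in H. simpl in H. lra.
Qed.

Lemma Jstar_inner_eq n Bs t y : Rabs y < Bs * sqrt (1 - t) ->
  Jstar n Bs t y = jfun n Bs Bs * pw n t
    * (Fq (2 * n + 1) (y / sqrt (1 - t)) + Fq (2 * n + 1) (- (y / sqrt (1 - t))))
    + 0 * y ^ (2 * n + 1).
Proof.
  intros Hy. unfold Jstar, Gq.
  destruct (Rlt_dec (Rabs y) (Bs * sqrt (1 - t))) as [_ | C]; [ring | easy].
Qed.

Lemma Jstar_left_eq n Bs t y : 0 <= Bs -> y < - Bs * sqrt (1 - t) ->
  Jstar n Bs t y = Bs ^ (2 * n + 1) / Fq (2 * n + 1) Bs * pw n t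
    * Fq (2 * n + 1) (y / sqrt (1 - t)) + (-1) * y ^ (2 * n + 1).
Proof.
  intros HB Hy. pose proof (sqrt_pos (1 - t)).
  assert (0 <= Bs * sqrt (1 - t)) by now apply Rmult_le_pos.
  unfold Jstar, g, U.
  destruct (Rlt_dec (Rabs y) (Bs * sqrt (1 - t))) as [C | _].
  { rewrite Rabs_left in C; lra. }
  destruct (Rle_dec y 0) as [_ | C]; [| lra].
  destruct (Rlt_dec y (Bs * sqrt (1 - t))) as [_ | C]; [| lra].
  unfold Rdiv. ring.
Qed.

Lemma Jstar_right_eq n Bs t y : 0 <= Bs -> Bs * sqrt (1 - t) < y ->
  Jstar n Bs t y = Bs ^ (2 * n + 1) / Fq (2 * n + 1) Bs * pw n t
    * Fq (2 * n + 1) (- (y / sqrt (1 - t))) + 1 * y ^ (2 * n + 1).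
Proof.
  intros HB Hy. pose proof (sqrt_pos (1 - t)).
  assert (0 <= Bs * sqrt (1 - t)) by now apply Rmult_le_pos.
  unfold Jstar, g, U.
  destruct (Rlt_dec (Rabs y) (Bs * sqrt (1 - t))) as [C | _].
  { rewrite Rabs_pos_eq in C; lra. }
  destruct (Rle_dec y 0) as [C | _]; [lra |].
  destruct (Rlt_dec (- y) (Bs * sqrt (1 - t))) as [_ | C]; [| lra].
  replace (- y / sqrt (1 - t)) with (- (y / sqrt (1 - t))) by (unfold Rdiv; ring).
  unfold Rdiv. ring.
Qed.

Lemma Lop_Jstar_inner n Bs t x : t < 1 -> Rabs x < Bs * sqrt (1 - t) ->
  L_defined (Jstar n Bs) t x /\ Lop (Jstar n Bs) t x = 0.
Proof.
  intros Ht Hx.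
  rewrite <- (Rmult_0_l (L_odd_power n t x)).
  apply (Lop_scaled_plus_odd_power _ (fun w => Fq (2 * n + 1) w + Fq (2 * n + 1) (- w))
           (fun w => Fq (2 * n + 2) w + - Fq (2 * n + 2) (- w))
           (fun w => Fq (2 * n + 3) w + Fq (2 * n + 3) (- w)) (jfun n Bs Bs)); [| easy | |].
  - apply hermite_ode_plus; [| apply hermite_ode_opp]; apply hermite_ode_Fq_odd.
  - apply (filter_imp (fun s => Rabs x < Bs * sqrt (1 - s))); [intros s; apply Jstar_inner_eq |].
    apply (locally_lt (fun _ => Rabs x));
      [apply continuous_const | now apply continuous_scaled_sqrt | easy].
  - apply (filter_imp (fun y => Rabs y < Bs * sqrt (1 - t))); [intros y; apply Jstar_inner_eq |].
    apply (locally_lt Rabs (fun _ => Bs * sqrt (1 - t)));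
      [apply continuous_Rabs | apply continuous_const | easy].
Qed.

Lemma outer_scaled_sq_ge n Bs t x : 0 < Bs -> Bfun n Bs = 0 -> t < 1 ->
  Bs * sqrt (1 - t) < Rabs x -> INR n + / 2 <= x ^ 2 / (1 - t).
Proof.
  intros HB Hzero Ht Hx.
  assert (Hss : sqrt (1 - t) * sqrt (1 - t) = 1 - t) by (apply sqrt_sqrt; lra).
  assert (0 <= Bs * sqrt (1 - t)) by (apply Rmult_le_pos; [lra | apply sqrt_pos]).
  apply Rle_trans with (Bs ^ 2); [now apply Bstar_sq_ge |].
  apply (Rmult_le_reg_r (1 - t)); [lra |].
  unfold Rdiv. rewrite Rmult_assoc, Rinv_l, Rmult_1_r by lra.
  rewrite <- (pow2_abs x), <- Hss.
  assert (Bs * sqrt (1 - t) * (Bs * sqrt (1 - t)) <= Rabs x * Rabs x)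
    by (apply Rmult_le_compat; lra).
  nra.
Qed.

Lemma Lop_Jstar_left n Bs t x : 0 < Bs -> t < 1 -> x < - Bs * sqrt (1 - t) ->
  INR n + / 2 <= x ^ 2 / (1 - t) ->
  L_defined (Jstar n Bs) t x /\ Lop (Jstar n Bs) t x <= 0.
Proof.
  intros HB Ht Hx Hsq. pose proof (sqrt_pos (1 - t)).
  destruct (Lop_scaled_plus_odd_power (Jstar n Bs) (Fq (2 * n + 1)) (Fq (2 * n + 2))
              (Fq (2 * n + 3)) (Bs ^ (2 * n + 1) / Fq (2 * n + 1) Bs) (-1) n t x)
    as [Hdef Hval]; [apply hermite_ode_Fq_odd | easy | | |].
  - apply (filter_imp (fun s => x < - Bs * sqrt (1 - s)));
      [intros s; apply Jstar_left_eq; lra |].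
    apply (locally_lt (fun _ => x));
      [apply continuous_const | now apply continuous_scaled_sqrt | easy].
  - apply (filter_imp (fun y => y < - Bs * sqrt (1 - t)));
      [intros y; apply Jstar_left_eq; lra |].
    apply (locally_lt (fun y => y)); [apply continuous_id | apply continuous_const | easy].
  - split; [easy |]. rewrite Hval. apply L_odd_power_sign; [easy | nra | easy].
Qed.

Lemma Lop_Jstar_right n Bs t x : 0 < Bs -> t < 1 -> Bs * sqrt (1 - t) < x ->
  INR n + / 2 <= x ^ 2 / (1 - t) ->
  L_defined (Jstar n Bs) t x /\ Lop (Jstar n Bs) t x <= 0.
Proof.
  intros HB Ht Hx Hsq. pose proof (sqrt_pos (1 - t)).
  destruct (Lop_scaled_plus_odd_power (Jstar n Bs) (fun w => Fq (2 * n + 1) (- w))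
              (fun w => - Fq (2 * n + 2) (- w)) (fun w => Fq (2 * n + 3) (- w))
              (Bs ^ (2 * n + 1) / Fq (2 * n + 1) Bs) 1 n t x)
    as [Hdef Hval]; [apply hermite_ode_opp, hermite_ode_Fq_odd | easy | | |].
  - apply (filter_imp (fun s => Bs * sqrt (1 - s) < x));
      [intros s; apply Jstar_right_eq; lra |].
    apply (locally_lt _ (fun _ => x));
      [now apply continuous_scaled_sqrt | apply continuous_const | easy].
  - apply (filter_imp (fun y => Bs * sqrt (1 - t) < y));
      [intros y; apply Jstar_right_eq; lra |].
    apply (locally_lt (fun _ => Bs * sqrt (1 - t)) (fun y => y));
      [apply continuous_const | apply continuous_id | easy].
  - split; [easy |]. rewrite Hval. apply L_odd_power_sign; [easy | nra | easy].
Qed.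

Theorem lemma4p6 (n : nat) (Bs : R)
  (HBpos : 0 < Bs)
  (HBzero : Bfun n Bs = 0)
  (HBuniq : forall B, 0 < B -> Bfun n B = 0 -> B = Bs) :
  (forall t x, 0 <= t < 1 -> Rabs x < Bs * sqrt (1 - t) ->
     L_defined (Jstar n Bs) t x /\ Lop (Jstar n Bs) t x = 0) /\
  (forall t x, 0 <= t < 1 -> Rabs x > Bs * sqrt (1 - t) ->
     L_defined (Jstar n Bs) t x /\ Lop (Jstar n Bs) t x <= 0).
Proof.
  split; intros t x [_ Ht] Hx.
  - now apply Lop_Jstar_inner.
  - pose proof (outer_scaled_sq_ge n Bs t x HBpos HBzero Ht Hx) as Hsq.
    destruct (Rlt_or_le x 0) as [Hneg | Hnonneg].
    + rewrite Rabs_left in Hx by easy.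
      apply Lop_Jstar_left; [easy | easy | lra | easy].
    + rewrite Rabs_pos_eq in Hx by easy. now apply Lop_Jstar_right.
Qed.
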